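(* Let $Q\ge0$, $R>0$, $M\ge0$ be symmetric matrices, $f:\mathbb{R}^n\times\mathbb{R}^m\to\mathbb{R}^n$ smooth, and consider an $s$-stage Runge–Kutta method with coefficients $a_{ij}$, $b_i>0$, step $h>0$ small enough that the constraints $x_{k+1}=x_k+h\sum_{i=1}^s b_if(x_{ki},u_{ki})$, $x_0=a$, $x_{ki}=x_k+h\sum_{j=1}^s a_{ij}f(x_{kj},u_{kj})$ ($0\le k\le N-1$, $1\le i\le s$) determine the vector of internal-stage states $X=(x_{01},\dots,x_{0s},\dots,x_{N-1,1},\dots,x_{N-1,s})$ and the node states $x_k$ as smooth functions $X=F(U)$, $x_k=F_d^k(U)$ of the vector of internal-stage controls $U=(u_{01},\dots,u_{0s},\dots,u_{N-1,s})$. Let $$J_d(U)=\tfrac12 F(U)^T\mathcal{Q}F(U)+\tfrac12U^T\mathcal{R}U+\tfrac12F_d^N(U)^TMF_d^N(U),$$ where $\mathcal{Q}$ (resp. $\mathcal{R}$) is the block-diagonal matrix whose diagonal blocks are, for each $k=0,\dots,N-1$ and $i=1,\dots,s$ in order, $hb_iQ$ (resp. $hb_iR$). Fix $U^0$, set $X^0=F(U^0)$, $x_N^0=F_d^N(U^0)$, and let $\tilde U$ be a minimizer of $\tfrac12X^T\mathcal{Q}X+\tfrac12U^T\mathcal{R}U+\tfrac12x_N^TMx_N$ over the tangent plane $X-X^0=F'(U^0)(U-U^0)$, $x_N-x_N^0=(F_d^N)'(U^0)(U-U^0)$ (the ILQR step). Then, with $$W(U^0)=F'(U^0)^T\mathcal{Q}F'(U^0)+\mathcal{R}+(F_d^N)'(U^0)^TM(F_d^N)'(U^0),$$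 the matrix $W(U^0)$ is symmetric positive definite, $\tilde U$ is unique, and $$\tilde U-U^0=-W(U^0)^{-1}J_d'(U^0);$$ in particular $\tilde U-U^0$ is a descent direction for $J_d$ at $U^0$ (i.e. $J_d'(U^0)^T(\tilde U-U^0)<0$ whenever $J_d'(U^0)\neq0$).
   Context: $J_d$ is the cost of the optimization problem obtained by discretizing, with the given Runge–Kutta method, the problem of minimizing $\int_0^{t_f}(\tfrac12x^TQx+\tfrac12u^TRu)dt+\tfrac12x(t_f)^TMx(t_f)$ subject to $\dot x=f(x,u)$, $x(0)=a$, with $h=t_f/N$. $J_d'$ denotes the gradient of $J_d$ with respect to $U$, and $F'$, $(F_d^N)'$ the Jacobians. *)

(* Row-vector convention (as in MathComp-Analysis' [jacobian]):
   vectors are row vectors, and 'd f p v = v *m jacobian f p, so the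
   column-convention Jacobian F'(U) of the paper is (jacobian F U)^T. *)
From HB Require Import structures.
From mathcomp Require Import all_boot all_order all_algebra.
From mathcomp Require Import all_classical all_reals all_analysis.
Set Implicit Arguments. Unset Strict Implicit. Unset Printing Implicit Defensive.
Import Order.TTheory GRing.Theory Num.Theory.
Import numFieldNormedType.Exports.
Local Open Scope ring_scope.

Definition qform (R : pzRingType) n (A : 'M[R]_n) (v : 'rV[R]_n) : R :=
  (v *m A *m v^T) 0 0.

Definition sym_psd (R : numDomainType) n (A : 'M[R]_n) : Prop :=
  A^T = A /\ forall v : 'rV[R]_n, 0 <= qform A v.

Definition sym_pd (R : numDomainType) n (A : 'M[R]_n) : Prop :=
  A^T = A /\ forall v : 'rV[R]_n, v != 0 -> 0 < qform A v.

(* internal stages (k,i), k < N, i < s, are enumerated in the order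
   (0,1),...,(0,s),...,(N-1,1),...,(N-1,s) by the index
   mxvec_index k i = k * s + i of 'I_(N*s). *)
Lemma stage_mod_lt (N s : nat) (j : 'I_(N * s)) : (j %% s < s)%N.
Proof.
rewrite ltn_mod; case: s j => // [[k]] /=; by rewrite muln0.
Qed.

Definition stage_i (N s : nat) (j : 'I_(N * s)) : 'I_s :=
  Ordinal (stage_mod_lt j).

Definition stU (R : Type) (N s m : nat)
  (U : 'rV[R]_(\sum_(j < N * s) m)) (k : 'I_N) (i : 'I_s) : 'rV[R]_m :=
  @submxrow R (N * s) (fun _ => m) 1 U (mxvec_index k i).

Definition blkW (R : pzRingType) (N s n : nat) (h : R) (b : 'rV[R]_s)
  (A : 'M[R]_n) : 'M[R]_(\sum_(j < N * s) n) :=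
  @mxdiag R (N * s) (fun _ => n) (fun j => (h * b 0 (stage_i j)) *: A).

Definition RK_constraints (R : pzRingType) (n m s N : nat)
  (f : 'rV[R]_n -> 'rV[R]_m -> 'rV[R]_n) (A : 'M[R]_s) (b : 'rV[R]_s)
  (h : R) (a : 'rV[R]_n)
  (U : 'rV[R]_(\sum_(j < N * s) m)) (X : 'rV[R]_(\sum_(j < N * s) n))
  (x : 'I_N.+1 -> 'rV[R]_n) : Prop :=
  [/\ x ord0 = a,
      forall k : 'I_N, x (lift ord0 k) =
        x (widen_ord (leqnSn N) k)
        + h *: \sum_(i < s) b 0 i *: f (stU X k i) (stU U k i)
    & forall (k : 'I_N) (i : 'I_s), stU X k i =
        x (widen_ord (leqnSn N) k)
        + h *: \sum_(j < s) A i j *: f (stU X k j) (stU U k j)].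

Definition Jd (R : fieldType) (n m s N : nat)
  (F : 'rV[R]_(\sum_(j < N * s) m) -> 'rV[R]_(\sum_(j < N * s) n))
  (FN : 'rV[R]_(\sum_(j < N * s) m) -> 'rV[R]_n)
  (QQ : 'M[R]_(\sum_(j < N * s) n)) (RR : 'M[R]_(\sum_(j < N * s) m))
  (M : 'M[R]_n) (U : 'rV[R]_(\sum_(j < N * s) m)) : R :=
  (1 / 2%:R) * qform QQ (F U) + (1 / 2%:R) * qform RR U
  + (1 / 2%:R) * qform M (FN U).

Definition grad (R : realType) p (g : 'rV[R]_p -> R) (x : 'rV[R]_p) : 'rV[R]_p :=
  (jacobian (fun y => (g y)%:M : 'rV[R]_1) x)^T.

From HB Require Import structures.
From mathcomp Require Import all_boot all_order all_algebra.
From mathcomp Require Import all_classical all_reals all_analysis.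
From mathcomp Require Import ring.
Import Order.TTheory GRing.Theory Num.Theory.
Import numFieldNormedType.Exports.
Local Open Scope ring_scope.

(* As a function of the step d = U - U0, the linearized cost is quadratic with
   Hessian the Gauss-Newton matrix W = JF QQ JF^T + RR + JN M JN^T, and its linear
   part is the gradient g of J_d at U0 (chain rule on the three quadratic terms
   of J_d). W is positive definite because RR, block diagonal with blocks
   h b_i R > 0, is. Completing the square, the cost is a constant plus
   1/2 (d + W^-1 g) W (d + W^-1 g)^T, so its unique minimizer is d = -W^-1 g, and
   g d^T = -(W^-1 g) W (W^-1 g)^T < 0 when g != 0. *)

Section QuadraticForms.
Context {R : comPzRingType} {p : nat}.
Implicit Types (A W : 'M[R]_p) (u v : 'rV[R]_p).

Lemma tr_mx11 (x : 'M[R]_1) : x^T = x.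
Proof. by apply/matrixP => i j; rewrite !ord1 mxE. Qed.

Lemma bilform_sym A u v : A^T = A -> u *m A *m v^T = v *m A *m u^T.
Proof. by move=> sA; rewrite -[LHS]tr_mx11 !trmx_mul trmxK sA mulmxA. Qed.

Lemma qform0 A : qform A 0 = 0.
Proof. by rewrite /qform !mul0mx mxE. Qed.

Lemma qformZ A (a : R) v : qform (a *: A) v = a * qform A v.
Proof. by rewrite /qform -scalemxAr -scalemxAl mxE. Qed.

Lemma qformD A u v : A^T = A ->
  qform A (u + v) = qform A u + 2 * (v *m A *m u^T) 0 0 + qform A v.
Proof.
move=> sA; rewrite /qform !(linearD, mulmxDl, mulmxDr) /= (bilform_sym A u v sA).
by rewrite !mxE; ring.
Qed.

Lemma qform_complete_square {W} {K : 'cV[R]_p} {e} u : W^T = W -> W *m e^T = K ->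
  qform W u + 2 * (u *m K) 0 0 = qform W (u + e) - qform W e.
Proof.
by move=> sW We; rewrite qformD // (bilform_sym W e u sW) -mulmxA We addrK.
Qed.

End QuadraticForms.

Lemma qform_mxdiag (R : pzRingType) k (p_ : 'I_k -> nat)
    (D : forall i, 'M[R]_(p_ i)) (v : 'rV[R]_(\sum_i p_ i)) :
  qform (mxdiag D) v = \sum_i qform (D i) (submxrow v i).
Proof.
rewrite /qform -[in LHS](submxrowK v) mul_mxrow_mxdiag tr_mxrow mul_mxrow_mxcol.
by rewrite summxE.
Qed.

Section StageWeights.
Context {R : numDomainType} {N s n : nat} {h : R} {b : 'rV[R]_s}.
Hypotheses (h_gt0 : 0 < h) (b_gt0 : forall i, 0 < b 0 i).

Lemma qform_blkW (A : 'M[R]_n) v :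
  qform (blkW N h b A) v = \sum_j h * b 0 (stage_i j) * qform A (submxrow v j).
Proof. by rewrite qform_mxdiag; apply: eq_bigr => j _; rewrite qformZ. Qed.

Lemma tr_blkW (A : 'M[R]_n) : A^T = A -> (blkW N h b A)^T = blkW N h b A.
Proof.
by move=> sA; rewrite tr_mxdiag; apply: eq_mxdiag => j; rewrite linearZ /= sA.
Qed.

Lemma blkW_psd {A : 'M[R]_n} : sym_psd A -> sym_psd (blkW N h b A).
Proof.
move=> [sA A_ge0]; split; first exact: tr_blkW.
move=> v; rewrite qform_blkW; apply: sumr_ge0 => j _.
by rewrite mulr_ge0 ?A_ge0 // ltW // mulr_gt0.
Qed.

Lemma blkW_pd {A : 'M[R]_n} : sym_pd A -> sym_pd (blkW N h b A).
Proof.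
move=> [sA A_gt0]; split; first exact: tr_blkW.
move=> v v_neq0; rewrite qform_blkW.
have [j vj_neq0] : exists j, submxrow v j != 0.
  apply/existsP; apply: contraNT v_neq0; rewrite negb_exists => /forallP v0.
  rewrite -(submxrowK v) -(mxrow0 (q_ := fun _ => n)); apply/eqP/eq_mxrow => i.
  by apply/eqP; rewrite -[_ == _]negbK v0.
rewrite (bigD1 j) //= ltr_pwDl ?mulr_gt0 ?A_gt0 //.
apply: sumr_ge0 => i _; apply: mulr_ge0; first exact/ltW/mulr_gt0.
by have [->|/A_gt0/ltW //] := eqVneq (submxrow v i) 0; rewrite qform0.
Qed.

End StageWeights.

Section GaussNewton.
Context {R : comPzRingType} {p q r : nat}.
Variables (QQ : 'M[R]_q) (RR : 'M[R]_p) (M : 'M[R]_r).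
Variables (JF : 'M[R]_(p, q)) (JN : 'M[R]_(p, r)).

Definition gauss_newton_mx : 'M[R]_p := JF *m QQ *m JF^T + RR + JN *m M *m JN^T.

Lemma qform_gauss_newton_mx v :
  qform gauss_newton_mx v = qform QQ (v *m JF) + qform RR v + qform M (v *m JN).
Proof. by rewrite /qform !(mulmxDr, mulmxDl) !trmx_mul !mulmxA !mxE. Qed.

Lemma tr_gauss_newton_mx : QQ^T = QQ -> RR^T = RR -> M^T = M ->
  gauss_newton_mx^T = gauss_newton_mx.
Proof. by move=> sQ sR sM; rewrite !linearD /= !trmx_mul !trmxK sQ sR sM !mulmxA. Qed.

Lemma qform_linearized_cost (X0 : 'rV[R]_q) (U0 : 'rV[R]_p) (xN0 : 'rV[R]_r) d :
  QQ^T = QQ -> RR^T = RR -> M^T = M ->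
  qform QQ (X0 + d *m JF) + qform RR (U0 + d) + qform M (xN0 + d *m JN) =
  qform QQ X0 + qform RR U0 + qform M xN0 + (qform gauss_newton_mx d
    + 2 * (d *m (JF *m QQ *m X0^T + RR *m U0^T + JN *m M *m xN0^T)) 0 0).
Proof.
move=> sQ sR sM; rewrite !qformD // qform_gauss_newton_mx.
by rewrite !mulmxDr !mulmxA !mxE; ring.
Qed.

End GaussNewton.

Section PositiveDefinite.
Context {R : numFieldType} {p : nat}.
Implicit Types (W : 'M[R]_p) (v : 'rV[R]_p).

Lemma sym_pd_qform_ge0 W v : sym_pd W -> 0 <= qform W v.
Proof. by move=> [_ W_gt0]; have [->|/W_gt0/ltW //] := eqVneq v 0; rewrite qform0. Qed.

Lemma sym_pd_unitmx W : sym_pd W -> W \in unitmx.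
Proof.
move=> [_ W_gt0]; rewrite -row_free_unit; apply: inj_row_free => v vW0.
by apply/eqP; apply: contraT => /W_gt0; rewrite /qform vW0 mul0mx mxE ltxx.
Qed.

Lemma sym_pd_argmin {W} {J : 'rV[R]_p -> R} {c k : R} {ustar} :
  sym_pd W -> 0 < k ->
  (forall u, J u = c + k * qform W (u - ustar)) ->
  forall v, (forall u, J v <= J u) <-> v = ustar.
Proof.
move=> W_pd k_gt0 JE v; split => [v_min|-> u]; last first.
  rewrite !JE subrr qform0 mulr0 addr0 lerDl.
  by rewrite mulr_ge0 ?sym_pd_qform_ge0 ?ltW.
apply/eqP; rewrite -subr_eq0; apply: contraT => /W_pd.2 Wv_gt0.
have := v_min ustar; rewrite !JE subrr qform0 mulr0 addr0 gerDl.
by move/(lt_le_trans (mulr_gt0 k_gt0 Wv_gt0)); rewrite ltxx.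
Qed.

Lemma sym_pd_descent W (g : 'rV[R]_p) : sym_pd W -> g != 0 ->
  (g *m - (invmx W *m g^T)) 0 0 < 0.
Proof.
move=> W_pd g_neq0; have [sW W_gt0] := W_pd.
set y := (invmx W *m g^T)^T.
have gE : g = y *m W.
  by apply: trmx_inj; rewrite trmx_mul trmxK sW mulKVmx // sym_pd_unitmx.
have y_neq0 : y != 0 by apply: contraNneq g_neq0 => y0; rewrite gE y0 mul0mx.
by rewrite -[invmx W *m g^T]trmxK -/y mulmxN mxE oppr_lt0 {1}gE W_gt0.
Qed.

End PositiveDefinite.

Lemma sym_pd_gauss_newton_mx {R : numFieldType} {p q r}
    {QQ : 'M[R]_q} {RR : 'M[R]_p} {M : 'M[R]_r} (JF : 'M[R]_(p, q)) (JN : 'M[R]_(p, r)) :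
  sym_psd QQ -> sym_pd RR -> sym_psd M -> sym_pd (gauss_newton_mx QQ RR M JF JN).
Proof.
move=> [sQ Q_ge0] [sR R_gt0] [sM M_ge0]; split; first exact: tr_gauss_newton_mx.
move=> v v_neq0; rewrite qform_gauss_newton_mx addrAC.
by rewrite ltr_wpDl ?R_gt0 ?addr_ge0.
Qed.

Lemma continuous_mx (R : numFieldType) (T : topologicalType) m n
    (f : T -> 'M[R]_(m, n)) :
  (forall i j, continuous (fun x => f x i j)) -> continuous f.
Proof.
move=> f_cont x A /= [P P_nbhs sPA].
have : \forall y \near x, forall ij : 'I_m * 'I_n, P ij.1 ij.2 (f y ij.1 ij.2).
  by apply: filter_forall => -[i j]; exact: f_cont.
by apply: filterS => y Py; apply: sPA => i j; exact: (Py (i, j)).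
Qed.

Lemma lin1_mx_mulmx (R : pzRingType) m n (K : 'M[R]_(m, n)) : lin1_mx (mulmx^~ K) = K.
Proof. by apply/matrixP => i j; rewrite mxE -rowE mxE. Qed.

Section BilinearForm.
Context {R : numFieldType} {p : nat}.
Variable A : 'M[R]_p.

Definition bilform (u v : 'rV[R]_p) : 'rV[R]_1 := u *m A *m v^T.

Lemma bilform_is_bilinear :
  bilinear_for (GRing.Scale.Law.clone _ _ *:%R _) (GRing.Scale.Law.clone _ _ *:%R _)
    bilform.
Proof.
split=> [u'|u] a x y; rewrite /bilform.
- by rewrite mulmxDl mulmxDl -!scalemxAl.
- by rewrite linearD /= linearZ /= mulmxDr -!scalemxAr.
Qed.

HB.instance Definition _ :=
  bilinear_isBilinear.Build R 'rV[R]_p 'rV[R]_p 'rV[R]_1 _ _ bilform bilform_is_bilinear.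

Lemma bilform_continuous : continuous (fun uv : 'rV[R]_p * 'rV[R]_p => bilform uv.1 uv.2).
Proof.
have coord1 i l : continuous (fun uv : 'rV[R]_p * 'rV[R]_p => uv.1 i l).
  move=> uv; apply: (continuous_comp (f := fst) (g := fun u : 'rV[R]_p => u i l)).
    exact: cvg_fst.
  exact: coord_continuous.
have coord2 i l : continuous (fun uv : 'rV[R]_p * 'rV[R]_p => uv.2 i l).
  move=> uv; apply: (continuous_comp (f := snd) (g := fun u : 'rV[R]_p => u i l)).
    exact: cvg_snd.
  exact: coord_continuous.
apply: continuous_mx => i j.
have -> : (fun uv : 'rV[R]_p * 'rV[R]_p => bilform uv.1 uv.2 i j) =
    (fun uv => \sum_k (\sum_l uv.1 i l * A l k) * uv.2 j k).
  by apply/funext => uv; rewrite !mxE; apply: eq_bigr => k _; rewrite !mxE.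
apply: continuous_big => [|k _]; first exact: add_continuous.
move=> uv; apply: continuousM; last exact: coord2.
apply: continuous_big => [|l _ uv']; first exact: add_continuous.
by apply: continuousM; [exact: coord1 | exact: cst_continuous].
Qed.

End BilinearForm.

Lemma is_diff_half_qform {R : numFieldType} {p q} {A : 'M[R]_q}
    {G dG : 'rV[R]_p -> 'rV[R]_q} {x} :
  A^T = A -> is_diff x G dG ->
  is_diff x (fun y => 2^-1 *: bilform A (G y) (G y)) (fun v => dG v *m A *m (G x)^T).
Proof.
move=> sA dG_x.
have dB : is_diff (G x, G x) (fun uv => bilform A uv.1 uv.2)
    (fun uv => bilform A (G x) uv.2 + bilform A uv.1 (G x)).
  apply: DiffDef; first exact: differentiable_bilin (bilform_continuous A).
  exact: diff_bilin (bilform_continuous A).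
have dG2 := is_diffZ 2^-1 (is_diff_comp (is_diff_pair dG_x dG_x) dB).
apply: DiffDef; first exact: ex_diff.
rewrite diff_val; apply/funext => v /=.
rewrite !fctE /bilform (bilform_sym A (G x)) // -mulr2n -scalerMnr scalerMnl.
by rewrite -mulr_natr mulVf ?pnatr_eq0 ?scale1r.
Qed.

Lemma grad_quadratic_cost (R : realType) p q r (F : 'rV[R]_p -> 'rV[R]_q)
    (FN : 'rV[R]_p -> 'rV[R]_r) (QQ : 'M[R]_q) (RR : 'M[R]_p) (M : 'M[R]_r) U0 :
  QQ^T = QQ -> RR^T = RR -> M^T = M -> differentiable F U0 -> differentiable FN U0 ->
  (grad (fun U => 1 / 2%:R * qform QQ (F U) + 1 / 2%:R * qform RR U
                  + 1 / 2%:R * qform M (FN U)) U0)^T =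
  'J F U0 *m QQ *m (F U0)^T + RR *m U0^T + 'J FN U0 *m M *m (FN U0)^T.
Proof.
move=> sQ sR sM /differentiableP dF /differentiableP dFN; rewrite /grad trmxK.
have -> : (fun U => (1 / 2%:R * qform QQ (F U) + 1 / 2%:R * qform RR U
                     + 1 / 2%:R * qform M (FN U))%:M : 'rV[R]_1) =
    (fun U => 2^-1 *: bilform QQ (F U) (F U)) + (fun U => 2^-1 *: bilform RR (id U) (id U))
    + (fun U => 2^-1 *: bilform M (FN U) (FN U)).
  by apply/funext => U; rewrite !fctE !raddfD /= -!scale_scalar_mx -!mx11_scalar div1r.
have dJ := is_diffD (is_diffD (is_diff_half_qform sQ dF)
  (is_diff_half_qform sR (is_diff_id U0))) (is_diff_half_qform sM dFN).
rewrite /jacobian diff_val -[RHS]lin1_mx_mulmx; congr lin1_mx; apply/funext => v.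
by rewrite !fctE -(mul_rV_lin1 ('d F U0)) -(mul_rV_lin1 ('d FN U0)) !mulmxDr !mulmxA.
Qed.

Theorem mainTheorem5 (R : realType) (n m s N : nat)
  (Q : 'M[R]_n) (Rm : 'M[R]_m) (M : 'M[R]_n)
  (f : 'rV[R]_n -> 'rV[R]_m -> 'rV[R]_n)
  (A : 'M[R]_s) (b : 'rV[R]_s) (h : R) (a : 'rV[R]_n)
  (F : 'rV[R]_(\sum_(j < N * s) m) -> 'rV[R]_(\sum_(j < N * s) n))
  (Fd : 'I_N.+1 -> 'rV[R]_(\sum_(j < N * s) m) -> 'rV[R]_n)
  (U0 : 'rV[R]_(\sum_(j < N * s) m)) :
  (0 < N)%N -> (0 < s)%N ->
  sym_psd Q -> sym_pd Rm -> sym_psd M ->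
  (forall p : 'rV[R]_n * 'rV[R]_m,
      differentiable (fun q : 'rV[R]_n * 'rV[R]_m => f q.1 q.2) p) ->
  (forall i : 'I_s, 0 < b 0 i) -> 0 < h ->
  (* F and Fd solve the Runge-Kutta constraints ... *)
  (forall U, RK_constraints f A b h a U (F U) (fun k => Fd k U)) ->
  (* ... and the constraints determine X and the x_k uniquely ... *)
  (forall U X x, RK_constraints f A b h a U X x ->
      X = F U /\ forall k, x k = Fd k U) ->
  (* ... as smooth (here: differentiable) functions of U *)
  (forall U, differentiable F U) ->
  (forall k U, differentiable (Fd k) U) ->
  let QQ := blkW N h b Q in
  let RR := blkW N h b Rm in
  let FN := Fd ord_max in
  let JF := jacobian F U0 in          (* = F'(U0)^T *)
  let JN := jacobian FN U0 in         (* = (F_d^N)'(U0)^T *)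
  let X0 := F U0 in
  let xN0 := FN U0 in
  let ilqr_cost := fun U =>
    (1 / 2%:R) * qform QQ (X0 + (U - U0) *m JF)
    + (1 / 2%:R) * qform RR U
    + (1 / 2%:R) * qform M (xN0 + (U - U0) *m JN) in
  let is_min := fun Ut => forall U, ilqr_cost Ut <= ilqr_cost U in
  let W := JF *m QQ *m JF^T + RR + JN *m M *m JN^T in
  let g := grad (Jd F FN QQ RR M) U0 in
  sym_pd W /\ (exists Ut, is_min Ut) /\
  forall Ut, is_min Ut ->
    (forall V, is_min V -> V = Ut) /\
    (Ut - U0)^T = - (invmx W *m g^T) /\
    (g != 0 -> (g *m (Ut - U0)^T) 0 0 < 0).
Proof.
move=> _ _ Q_psd Rm_pd M_psd _ b_gt0 h_gt0 _ _ dF dFd QQ RR FN JF JN X0 xN0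
  cost is_min W g.
have QQ_psd : sym_psd QQ := blkW_psd h_gt0 b_gt0 Q_psd.
have RR_pd : sym_pd RR := blkW_pd h_gt0 b_gt0 Rm_pd.
have W_pd : sym_pd W := sym_pd_gauss_newton_mx JF JN QQ_psd RR_pd M_psd.
have gE : g^T = JF *m QQ *m X0^T + RR *m U0^T + JN *m M *m xN0^T.
  exact: grad_quadratic_cost QQ_psd.1 RR_pd.1 M_psd.1 (dF U0) (dFd _ U0).
pose e := (invmx W *m g^T)^T.
have We : W *m e^T = g^T by rewrite trmxK mulKVmx // sym_pd_unitmx.
have costE U : cost U = 1 / 2%:R * (qform QQ X0 + qform RR U0 + qform M xN0 - qform W e)
                        + 1 / 2%:R * qform W (U - (U0 - e)).
  rewrite /cost -[X in qform RR X](subrK U0 U) [_ + U0]addrC -!mulrDr.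
  rewrite qform_linearized_cost ?QQ_psd.1 ?RR_pd.1 ?M_psd.1 // -gE.
  rewrite (qform_complete_square _ W_pd.1 We) opprD opprK [U + (_ + _)]addrA.
  by ring.
have minE := sym_pd_argmin W_pd (divr_gt0 ltr01 (ltr0Sn _ 1)) costE.
split=> //; split; first by exists (U0 - e); apply/minE.
move=> Ut /minE ->; split; first by move=> V /minE.
rewrite addrAC subrr add0r linearN /= trmxK; split=> // g_neq0.
exact: sym_pd_descent.
Qed.
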